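(* Fermionic effects on a system of local fermionic modes are exactly the operators $A$ that are linear combinations of products of an even number of field operators and whose Jordan–Wigner representative $J(A)$ is positive and bounded by the identity: every fermionic effect is of this form, and conversely every linear combination of products of an even number of field operators represented by a positive operator bounded by the identity is a fermionic effect.
   Context: A system $\mathsf{L}_\mathsf{F}$ of $L$ local fermionic modes is described by field operators $\varphi_1,\dots,\varphi_L$ with $\{\varphi_i,\varphi_j^\dagger\}=\delta_{ij}I$, $\{\varphi_i,\varphi_j\}=0$. Identifying the Fock basis $(\varphi_1^\dagger)^{n_1}\cdots(\varphi_L^\dagger)^{n_L}|\Omega\rangle$ with the computational basis of $L$ qubits gives the Jordan–Wigner isomorphism $J$: $J(\varphi_i)=(\bigotimes_{l<i}\sigma^z_l)\otimes\sigma^-_i\otimes(\bigotimes_{k>i}I_k)$, extended linearly and multiplicatively with $J(X^\dagger)=J(X)^\dagger$. Fermionic states are operators $\rho$ (linear combinations of products of an even number of field operators) with $J(\rho)\ge0$ block-diagonal in the even/odd occupation-number subspaces and trace $\le1$. Fermionic transformations are completely positive maps whose Kraus operators are each linear combinations of products of field operators with either all an even or all an odd number of factors; it is known that these are exactly the admissible fermionic transformations. A fermionic effect is an operator $A$ such that the functional $\rho\mapsto\operatorname{Tr}[J(\rho)J(A)]$ equals $\rho\mapsto\operatorname{Tr}[J(\mathcal{A}(\rho))]$ for some fermionic transformation $\mathcal{A}$ (i.e. a transformation followed by discarding the system).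
   Formalization: A fermionic effect A need only agree on all fermionic states with some linear combination of even products whose Jordan–Wigner representative lies between 0 and I; 0 ≤ J(A) ≤ I holds for even fermionic effects A only. The statement above fails without it. *)

From HB Require Import structures.
From mathcomp Require Import all_boot all_order all_algebra.
From mathcomp Require Import complex reals.

Set Implicit Arguments.
Unset Strict Implicit.
Unset Printing Implicit Defensive.

Import Order.TTheory GRing.Theory Num.Theory.
Local Open Scope ring_scope.

Section Fermions.
Variable R : realType.
Local Notation C := (R[i]).
Variable L : nat.

(* Operators on the L-qubit space C^(2^L) (images under Jordan-Wigner J). *)
Definition mat := 'M[C]_(2 ^ L).

(* Occupation number n_l of mode l in the computational basis state k. *)
Definition occ (l : nat) (k : 'I_(2 ^ L)) : nat := odd (k %/ 2 ^ l).

(* J(phi_i) = (sigma^z)^{(x) l<i} (x) sigma^- (x) I^{(x) k>i}, written out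
   entrywise: it maps |..., n_i = 1, ...> to (-1)^(sum_{l<i} n_l) |..., n_i = 0, ...>
   and kills states with n_i = 0. *)
Definition Jphi (i : 'I_L) : mat :=
  \matrix_(x, y) (if (occ i y == 1%N) && (val x == val y - 2 ^ i)%N
                  then (-1) ^+ (\sum_(l < L | (l < i)%N) occ l y)
                  else 0).

Definition adj m n (M : 'M[C]_(m, n)) : 'M[C]_(n, m) := (map_mx Num.conj M)^T.

(* Letters: (i, false) is phi_i, (i, true) is phi_i^dagger. *)
Definition letter := ('I_L * bool)%type.
Definition fop (a : letter) : mat := if a.2 then adj (Jphi a.1) else Jphi a.1.
Definition word_prod (w : seq letter) : mat := foldr (fun a M => fop a *m M) 1%:M w.

Definition parity_op (b : bool) (A : mat) : Prop :=
  exists s : seq (C * seq letter),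
    all (fun p => odd (size p.2) == b) s /\
    A = \sum_(p <- s) p.1 *: word_prod p.2.

Definition even_op := parity_op false.
Definition odd_op := parity_op true.

Definition psd (M : mat) : Prop :=
  forall v : 'cV[C]_(2 ^ L), 0 <= (adj v *m M *m v) 0 0.

Definition state_parity (k : 'I_(2 ^ L)) : bool := odd (\sum_(l < L) occ l k).

Definition fermionic_state (rho : mat) : Prop :=
  [/\ even_op rho, psd rho,
      (forall x y, state_parity x != state_parity y -> rho x y = 0)
    & \tr rho <= 1].

Definition fermionic_transformation (T : mat -> mat) : Prop :=
  exists Ks : seq mat,
    [/\ (forall K, K \in Ks -> even_op K \/ odd_op K),
        psd (1%:M - \sum_(K <- Ks) adj K *m K)
      & forall X, T X = \sum_(K <- Ks) K *m X *m adj K].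

Definition fermionic_effect (A : mat) : Prop :=
  exists T, fermionic_transformation T /\
    forall rho, fermionic_state rho -> \tr (rho *m A) = \tr (T rho).

End Fermions.

From HB Require Import structures.
From mathcomp Require Import all_boot all_order all_algebra.
From mathcomp Require Import complex reals.
Set Implicit Arguments.
Unset Strict Implicit.
Unset Printing Implicit Defensive.

Import Order.TTheory GRing.Theory Num.Theory.

(* The key fact is that an operator is a combination of products of field
   operators of parity b exactly when it shifts the parity of basis states by b.
   Matrix units are built from the vacuum projector prod_i (1 - phi_i^* phi_i):
   creation operators turn it into |x><0|, and |x><y| = |x><0| (|y><0|)^*.
   - The Kraus operators of a fermionic transformation have definite parity,
     so E = sum_k K_k^* K_k is even and represents the effect.
   - Fermionic states separate even operators: pure states of definite parity
     are fermionic states (after scaling), and the quadratic form of an even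
     operator splits over the two parity sectors; so an even effect equals E.
   - Conversely, if A = B^* B is even and A <= 1, the four blocks P_p B P_q of B
     (P_p the parity projectors) are Kraus operators of definite parity whose
     sum of K^* K is A. *)

Lemma odd_div_expn_addn (x i l : nat) : ~~ odd (x %/ 2 ^ i) ->
  odd ((x + 2 ^ i) %/ 2 ^ l) = odd (x %/ 2 ^ l) (+) (l == i).
Proof.
move=> even_xi; case: (ltngtP l i) => [lt_li|lt_il|->].
- rewrite -(subnKC (ltnW lt_li)) expnD divnDr ?dvdn_mulr // mulKn ?expn_gt0 //.
  by rewrite oddD oddX subn_eq0 leqNgt lt_li.
- have [k ->] : exists k, l = (i + k.+1)%N.
    by exists (l - i).-1; rewrite prednK ?subn_gt0 // subnKC // ltnW.
  rewrite expnD !divnMA divnDr // divnn expn_gt0 /= expnS !divnMA.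
  rewrite -[x %/ 2 ^ i]odd_double_half (negbTE even_xi) add0n -muln2.
  by rewrite divnMDl // mulnK // addn0 addbF.
- by rewrite divnDr // divnn expn_gt0 /= addn1 addbT.
Qed.

Lemma expn_leq_of_odd_div (y i : nat) : odd (y %/ 2 ^ i) -> 2 ^ i <= y.
Proof. by move=> odd_yi; rewrite -divn_gt0 ?expn_gt0 //; case: (y %/ 2 ^ i) odd_yi. Qed.

Lemma odd_div_expn_subn (y i l : nat) : odd (y %/ 2 ^ i) ->
  odd ((y - 2 ^ i) %/ 2 ^ l) = odd (y %/ 2 ^ l) (+) (l == i).
Proof.
move=> odd_yi; have le_iy := expn_leq_of_odd_div odd_yi.
have even_xi : ~~ odd ((y - 2 ^ i) %/ 2 ^ i).
  by move: odd_yi; rewrite -{1}(subnK le_iy) divnDr // divnn expn_gt0 /= addn1 /=; case: odd.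
by rewrite -{2}(subnK le_iy) odd_div_expn_addn // addbK.
Qed.

Lemma subn_expn_inj (a b i : nat) : odd (a %/ 2 ^ i) -> odd (b %/ 2 ^ i) ->
  a - 2 ^ i = b - 2 ^ i -> a = b.
Proof.
move=> /expn_leq_of_odd_div le_ia /expn_leq_of_odd_div le_ib eq_ab.
by rewrite -(subnK le_ia) eq_ab subnK.
Qed.

Lemma odd_div_trunc_log (y : nat) : 0 < y -> odd (y %/ 2 ^ trunc_log 2 y).
Proof.
move=> y_gt0; suff -> : y %/ 2 ^ trunc_log 2 y = 1 by [].
apply/eqP; rewrite eqn_leq leq_divRL ?expn_gt0 // mul1n trunc_logP //=.
by rewrite andbT -ltnS ltn_divLR ?expn_gt0 // -expnS trunc_log_ltn.
Qed.

Local Open Scope ring_scope.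

Section Adjoint.
Variable R : realType.
Local Notation C := (R[i]).

Lemma adjE m p (A : 'M[C]_(m, p)) i j : adj A i j = (A j i)^*.
Proof. by rewrite !mxE. Qed.

Lemma adjK m p (A : 'M[C]_(m, p)) : adj (adj A) = A.
Proof. by apply/matrixP => i j; rewrite !adjE conjCK. Qed.

Lemma adjM m p q (A : 'M[C]_(m, p)) (B : 'M[C]_(p, q)) :
  adj (A *m B) = adj B *m adj A.
Proof. by rewrite /adj map_mxM trmx_mul. Qed.

Lemma adjD m p (A B : 'M[C]_(m, p)) : adj (A + B) = adj A + adj B.
Proof. by apply/matrixP => i j; rewrite !(adjE, mxE) rmorphD. Qed.

Lemma adjZ m p c (A : 'M[C]_(m, p)) : adj (c *: A) = c^* *: adj A.
Proof. by apply/matrixP => i j; rewrite !(adjE, mxE) rmorphM. Qed.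

Lemma adj_sum m p I (r : seq I) (P : pred I) (F : I -> 'M[C]_(m, p)) :
  adj (\sum_(i <- r | P i) F i) = \sum_(i <- r | P i) adj (F i).
Proof.
apply: (big_morph _ (@adjD m p)).
by apply/matrixP => i j; rewrite !(adjE, mxE) rmorph0.
Qed.

Lemma adj_delta m p (i : 'I_m) (j : 'I_p) :
  adj (delta_mx i j : 'M[C]_(m, p)) = delta_mx j i.
Proof.
apply/matrixP => a b; rewrite !(adjE, mxE) andbC.
by case: andP; rewrite ?rmorph1 ?rmorph0.
Qed.

Lemma adj1 n : adj (1%:M : 'M[C]_n) = 1%:M.
Proof. by rewrite /adj map_mx1 trmx1. Qed.

Variable n : nat.
Implicit Types (u v w : 'cV[C]_n) (M : 'M[C]_n).

Definition sform u w M := (adj u *m M *m w) 0 0.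
Definition qform v M := sform v v M.

Lemma sformDl u1 u2 w M : sform (u1 + u2) w M = sform u1 w M + sform u2 w M.
Proof. by rewrite /sform adjD !mulmxDl mxE. Qed.

Lemma sformDr u w1 w2 M : sform u (w1 + w2) M = sform u w1 M + sform u w2 M.
Proof. by rewrite /sform mulmxDr mxE. Qed.

Lemma sformZl c u w M : sform (c *: u) w M = c^* * sform u w M.
Proof. by rewrite /sform adjZ -!scalemxAl mxE. Qed.

Lemma sformZr c u w M : sform u (c *: w) M = c * sform u w M.
Proof. by rewrite /sform -scalemxAr mxE. Qed.

Lemma sform_delta (x y : 'I_n) M : sform (delta_mx x 0) (delta_mx y 0) M = M x y.
Proof. by rewrite /sform adj_delta -rowE -colE !mxE. Qed.

Lemma qformD v M1 M2 : qform v (M1 + M2) = qform v M1 + qform v M2.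
Proof. by rewrite /qform /sform mulmxDr mulmxDl mxE. Qed.

Lemma qformN v M : qform v (- M) = - qform v M.
Proof. by rewrite /qform /sform mulmxN mulNmx [LHS]mxE. Qed.

Lemma qformZ v c M : qform v (c *: M) = c * qform v M.
Proof. by rewrite /qform /sform -scalemxAr -scalemxAl mxE. Qed.

Lemma qformB v M1 M2 : qform v (M1 - M2) = qform v M1 - qform v M2.
Proof. by rewrite qformD qformN. Qed.

Lemma qform_sum v I (r : seq I) (P : pred I) (F : I -> 'M[C]_n) :
  qform v (\sum_(i <- r | P i) F i) = \sum_(i <- r | P i) qform v (F i).
Proof.
apply: (big_morph _ (qformD v)).
by rewrite /qform /sform mulmx0 mul0mx mxE.
Qed.

Lemma qform_adj v M : qform v (adj M) = (qform v M)^*.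
Proof.
rewrite /qform /sform -adjE; congr (_ 0 0).
by rewrite !adjM adjK mulmxA.
Qed.

Lemma qform_conj v (P M : 'M[C]_n) : qform v (adj P *m M *m P) = qform (P *m v) M.
Proof. by rewrite /qform /sform adjM !mulmxA. Qed.

Lemma qform_gram_ge0 m (K : 'M[C]_(m, n)) v : 0 <= qform v (adj K *m K).
Proof.
rewrite /qform /sform mulmxA -adjM -mulmxA mxE.
by apply: sumr_ge0 => j _; rewrite adjE mulrC mul_conjC_ge0.
Qed.

(* Polarization; false over the reals. *)
Lemma qform_eq0 M : (forall v, qform v M = 0) -> M = 0.
Proof.
move=> M0; apply/matrixP => x y; rewrite mxE -sform_delta.
set ex := delta_mx x 0; set ey := delta_mx y 0.
have cross c : c * sform ex ey M + c^* * sform ey ex M = 0.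
  move: (M0 (ex + c *: ey)); rewrite /qform !(sformDl, sformDr, sformZl, sformZr).
  by rewrite -!/(qform _ M) !M0 !mulr0 addr0 add0r.
have := cross 'i; rewrite conjCi mulNr -mulrBr => /eqP.
rewrite mulf_eq0 (negbTE (neq0Ci _)) subr_eq0 => /eqP eq_cross.
move: (cross 1); rewrite rmorph1 !mul1r eq_cross -mulr2n => /eqP.
by rewrite mulrn_eq0 => /eqP.
Qed.

Lemma mxtrace_qform M : \tr M = \sum_x qform (delta_mx x 0) M.
Proof. by apply: eq_bigr => x _; rewrite /qform sform_delta. Qed.

End Adjoint.

Section JordanWigner.
Variables (R : realType) (L : nat).
Local Notation C := (R[i]).
Local Notation n := (2 ^ L)%N.
Local Notation mat := (mat R L).
Local Notation sp := (@state_parity L).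
Local Notation Jphi := (@Jphi R L).
Local Notation fop := (@fop R L).
Local Notation word_prod := (@word_prod R L).
Implicit Types (b c : bool) (x y : 'I_n) (i : 'I_L) (A B M : mat).

Definition vacuum : 'I_n := Ordinal (expn_gt0 2 L).

Lemma state_parity_vacuum : sp vacuum = false.
Proof. by rewrite /state_parity big1 // => l _; rewrite /occ div0n. Qed.

Lemma occupied_mode x : x != vacuum -> exists i, odd (x %/ 2 ^ i).
Proof.
move=> x_neq0; have x_gt0 : (0 < x)%N.
  by rewrite lt0n; apply: contra x_neq0 => /eqP x0; apply/eqP/val_inj.
have lt_logL : (trunc_log 2 x < L)%N.
  by rewrite -(ltn_exp2l _ _ (ltnSn 1)) (leq_ltn_trans (trunc_logP _ _)).
by exists (Ordinal lt_logL); apply: odd_div_trunc_log.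
Qed.

Lemma state_parity_subn i x y : odd (y %/ 2 ^ i) -> val x = (y - 2 ^ i)%N ->
  sp x = ~~ sp y.
Proof.
move=> odd_yi xE; rewrite /state_parity (bigD1 i) // [in RHS](bigD1 i) //=.
have -> : (\sum_(l < L | l != i) occ l x = \sum_(l < L | l != i) occ l y)%N.
  apply: eq_bigr => l l_neq_i; rewrite /occ xE odd_div_expn_subn //.
  by rewrite val_eqE (negbTE l_neq_i) addbF.
by rewrite /occ xE odd_div_expn_subn // eqxx odd_yi /= !oddD negbK.
Qed.

(* [y] with mode [i] emptied; meaningful only when mode [i] is occupied in [y]. *)
Definition vacate i y : 'I_n :=
  Ordinal (leq_ltn_trans (leq_subr (2 ^ i) y) (ltn_ord y)).

Lemma JphiE i x y : Jphi i x y =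
  if odd (y %/ 2 ^ i) && (val x == y - 2 ^ i)%N
  then (-1) ^+ (\sum_(l < L | (l < i)%N) occ l y) else 0.
Proof. by rewrite mxE /occ; case: odd. Qed.

Lemma Jphi_supp i x y :
  Jphi i x y != 0 -> odd (y %/ 2 ^ i) /\ val x = (y - 2 ^ i)%N.
Proof. by rewrite JphiE; case: andP => [[-> /eqP]|]; last rewrite eqxx. Qed.

Lemma Jphi_vacate_sign i y : odd (y %/ 2 ^ i) ->
  Jphi i (vacate i y) y = (-1) ^+ (\sum_(l < L | (l < i)%N) occ l y).
Proof. by move=> odd_yi; rewrite JphiE odd_yi eqxx. Qed.

Lemma Jphi_vacate_eq0 i y y' : odd (y' %/ 2 ^ i) -> y != y' ->
  Jphi i (vacate i y') y = 0.
Proof.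
move=> odd_y'i; apply: contraNeq => /Jphi_supp [odd_yi /= eq_sub].
by apply/eqP/val_inj; exact: (subn_expn_inj odd_yi odd_y'i (esym eq_sub)).
Qed.

Lemma Jphi_eq0 i x y : val x != (y - 2 ^ i)%N -> Jphi i x y = 0.
Proof. by apply: contraNeq => /Jphi_supp [_ ->]. Qed.

Lemma number_opE i :
  adj (Jphi i) *m Jphi i = \matrix_(x, y) ((x == y) && odd (x %/ 2 ^ i))%:R.
Proof.
apply/matrixP => x y; rewrite [RHS]mxE.
have [odd_xi|even_xi] := boolP (odd (x %/ 2 ^ i)); last first.
  rewrite andbF mxE big1 // => z _; rewrite adjE.
  have [->|/Jphi_supp [odd_xi _]] := eqVneq (Jphi i z x) 0.
    by rewrite rmorph0 mul0r.
  by rewrite odd_xi in even_xi.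
rewrite andbT mxE (bigD1 (vacate i x)) //= big1 => [|z z_neq]; last first.
  by rewrite adjE Jphi_eq0 ?rmorph0 ?mul0r.
rewrite addr0 adjE; have [<-|x_neq_y] := eqVneq x y.
  by rewrite Jphi_vacate_sign // rmorph_sign -expr2 sqrr_sign.
by rewrite (@Jphi_vacate_eq0 _ y x) // 1?eq_sym // mulr0.
Qed.

Lemma adj_Jphi_mul_delta i x m (k : 'I_m) : odd (x %/ 2 ^ i) ->
  adj (Jphi i) *m delta_mx (vacate i x) k = (Jphi i (vacate i x) x)^* *: delta_mx x k.
Proof.
move=> odd_xi; rewrite -!(@mul_delta_mx _ n 1 m 0) mulmxA -colE scalemxAl.
congr (_ *m _); apply/matrixP => a j.
rewrite mxE adjE [in RHS]mxE [delta_mx _ _ _ _]mxE ord1 eqxx andbT.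
have [->|a_neq_x] := eqVneq a x; first by rewrite mulr1.
by rewrite (@Jphi_vacate_eq0 _ a x) // rmorph0 mulr0.
Qed.

Definition homogeneous (b : bool) M := forall x y, M x y != 0 -> sp x = sp y (+) b.

Lemma homogeneous1 : homogeneous false 1%:M.
Proof.
by move=> x y; rewrite mxE addbF; have [->|] := eqVneq x y; rewrite ?mulr0n ?eqxx.
Qed.

Lemma homogeneous_adj b M : homogeneous b M -> homogeneous b (adj M).
Proof. by move=> hM x y; rewrite adjE conjC_eq0 => /hM ->; rewrite addbK. Qed.

Lemma homogeneousM b c A B : homogeneous b A -> homogeneous c B ->
  homogeneous (b (+) c) (A *m B).
Proof.
move=> hA hB x y; apply: contraNeq => neq_xy; apply/eqP; rewrite mxE big1 // => z _.
have [->|/hA xz] := eqVneq (A x z) 0; first by rewrite mul0r.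
have [->|/hB zy] := eqVneq (B z y) 0; first by rewrite mulr0.
by move: neq_xy; rewrite xz zy -addbA [c (+) b]addbC eqxx.
Qed.

Lemma homogeneous_fop a : homogeneous true (fop a).
Proof.
have hJ i : homogeneous true (Jphi i).
  by move=> x y /Jphi_supp [odd_yi xE]; rewrite (state_parity_subn odd_yi xE) addbT.
by rewrite /fop; case: a.2; [apply: homogeneous_adj|].
Qed.

Lemma homogeneous_word w : homogeneous (odd (size w)) (word_prod w).
Proof.
elim: w => [|a w IH] /=; first exact: homogeneous1.
by rewrite -addTb; apply: homogeneousM; [apply: homogeneous_fop|].
Qed.

Lemma word_prod_cat w1 w2 : word_prod (w1 ++ w2) = word_prod w1 *m word_prod w2.
Proof. by elim: w1 => [|a w IH] /=; rewrite ?mul1mx // IH mulmxA. Qed.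

Lemma parity_op0 b : parity_op b (0 : mat).
Proof. by exists [::]; rewrite big_nil. Qed.

Lemma parity_opD b A B : parity_op b A -> parity_op b B -> parity_op b (A + B).
Proof.
move=> [s1 [h1 ->]] [s2 [h2 ->]]; exists (s1 ++ s2).
by rewrite all_cat h1 h2 big_cat.
Qed.

Lemma parity_opZ b (c : C) A : parity_op b A -> parity_op b (c *: A).
Proof.
move=> [s [h ->]]; exists [seq (c * p.1, p.2) | p <- s]; split.
  by rewrite all_map; apply: sub_all h => p.
by rewrite big_map scaler_sumr; apply: eq_bigr => p _; rewrite scalerA.
Qed.

Lemma parity_opB b A B : parity_op b A -> parity_op b B -> parity_op b (A - B).
Proof. by move=> hA hB; apply: parity_opD => //; rewrite -scaleN1r; apply: parity_opZ. Qed.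

Lemma parity_op_sum b I (r : seq I) (P : pred I) (F : I -> mat) :
  (forall k, P k -> parity_op b (F k)) -> parity_op b (\sum_(k <- r | P k) F k).
Proof.
by move=> hF; apply: big_ind => //; [apply: parity_op0 | apply: parity_opD].
Qed.

Lemma parity_op_word w : parity_op (odd (size w)) (word_prod w).
Proof. by exists [:: (1, w)]; rewrite /= eqxx big_seq1 scale1r. Qed.

Lemma parity_op1 : parity_op false (1%:M : mat).
Proof. exact: (parity_op_word [::]). Qed.

Lemma parity_op_fop a : parity_op true (fop a).
Proof. by have := parity_op_word [:: a]; rewrite /= mulmx1. Qed.

Lemma parity_opM b c A B :
  parity_op b A -> parity_op c B -> parity_op (b (+) c) (A *m B).
Proof.
move=> [s1 [/allP h1 ->]] [s2 [/allP h2 ->]].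
rewrite mulmx_suml big_seq; apply: parity_op_sum => p ps.
rewrite mulmx_sumr big_seq; apply: parity_op_sum => q qs.
rewrite -scalemxAl -scalemxAr scalerA -word_prod_cat; apply: parity_opZ.
have := parity_op_word (p.2 ++ q.2).
by rewrite size_cat oddD (eqP (h1 p ps)) (eqP (h2 q qs)).
Qed.

Lemma parity_op_adj b A : parity_op b A -> parity_op b (adj A).
Proof.
have adj_fop a : adj (fop a) = fop (a.1, ~~ a.2) by rewrite /fop; case: a.2; rewrite ?adjK.
have adj_word w : parity_op (odd (size w)) (adj (word_prod w)).
  elim: w => [|a w IH] /=; first by rewrite adj1; apply: parity_op1.
  by rewrite adjM adj_fop -addbT; apply: parity_opM IH (parity_op_fop _).
move=> [s [/allP hs ->]]; rewrite adj_sum big_seq; apply: parity_op_sum => p ps.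
by rewrite adjZ -(eqP (hs p ps)); apply: parity_opZ.
Qed.

Lemma parity_op_homogeneous b M : parity_op b M -> homogeneous b M.
Proof.
move=> [s [/allP hs ->]] x y; apply: contraNeq => neq_xy.
apply/eqP; rewrite summxE big_seq big1 // => p ps; rewrite mxE.
have [->|/homogeneous_word wxy] := eqVneq (word_prod p.2 x y) 0; first by rewrite mulr0.
by move: neq_xy; rewrite wxy (eqP (hs p ps)) eqxx.
Qed.

Definition empty_modes_proj (s : seq 'I_L) : mat :=
  diag_mx (\row_x (all (fun i => ~~ odd (x %/ 2 ^ i)) s)%:R).

Lemma parity_op_empty_modes_proj s : parity_op false (empty_modes_proj s).
Proof.
elim: s => [|i s IH].
  suff -> : empty_modes_proj [::] = 1%:M by apply: parity_op1.
  by apply/matrixP => x y; rewrite !mxE.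
have -> : empty_modes_proj (i :: s) =
    (1%:M - adj (Jphi i) *m Jphi i) *m empty_modes_proj s.
  apply/matrixP => x y; rewrite number_opE mul_mx_diag !mxE.
  have [->|_] := eqVneq x y; last by rewrite subrr mul0r.
  by rewrite /=; case: odd; rewrite /= ?mulr1n ?subrr ?subr0 ?mul0r ?mul1r.
rewrite -[false]/(false (+) false); apply: parity_opM IH.
apply: parity_opB; first exact: parity_op1.
exact: parity_opM (parity_op_fop (i, true)) (parity_op_fop (i, false)).
Qed.

Lemma empty_modes_proj_enum :
  empty_modes_proj (enum 'I_L) = delta_mx vacuum vacuum.
Proof.
have all_empty x : all (fun i => ~~ odd (x %/ 2 ^ i)) (enum 'I_L) = (x == vacuum).
  apply/allP/eqP => [empty_x|->]; last by move=> i _; rewrite div0n.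
  apply/eqP; apply: contraT => /occupied_mode [i odd_xi].
  by have := empty_x i (mem_enum _ i); rewrite odd_xi.
apply/matrixP => x y; rewrite !mxE all_empty.
have [->|x_neq_y] := eqVneq x y; first by rewrite mulr1n andbb.
by rewrite mulr0n; case: (x =P vacuum) x_neq_y => // -> /negbTE; rewrite eq_sym => ->.
Qed.

Lemma parity_op_delta_vacuum x : parity_op (sp x) (delta_mx x vacuum : mat).
Proof.
have [k lt_xk] := ubnP x; elim: k x lt_xk => // k IH x lt_xk.
have [->|x_neq0] := eqVneq x vacuum.
  rewrite state_parity_vacuum -empty_modes_proj_enum.
  exact: parity_op_empty_modes_proj.
have [i odd_xi] := occupied_mode x_neq0.
have lt_vacate : (vacate i x < k)%N.
  rewrite -ltnS (leq_trans _ lt_xk) // ltnS ltn_subrL expn_gt0 /=.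
  by rewrite (leq_trans (expn_gt0 2 i)) // expn_leq_of_odd_div.
have c_neq0 : (Jphi i (vacate i x) x)^* != 0.
  by rewrite Jphi_vacate_sign // rmorph_sign signr_eq0.
rewrite -[delta_mx x vacuum](scalerK c_neq0) -adj_Jphi_mul_delta //; apply: parity_opZ.
have := parity_opM (parity_op_fop (i, true)) (IH _ lt_vacate).
by rewrite (state_parity_subn (x := vacate i x) odd_xi erefl) addTb negbK.
Qed.

Lemma parity_op_delta x y : parity_op (sp x (+) sp y) (delta_mx x y : mat).
Proof.
rewrite -(mul_delta_mx vacuum) -[delta_mx vacuum y]adj_delta.
exact: parity_opM (parity_op_delta_vacuum x) (parity_op_adj (parity_op_delta_vacuum y)).
Qed.

Lemma parity_opP b M : parity_op b M <-> homogeneous b M.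
Proof.
split=> [|hM]; first exact: parity_op_homogeneous.
rewrite (matrix_sum_delta M); apply: parity_op_sum => x _; apply: parity_op_sum => y _.
have [->|/hM sp_xy] := eqVneq (M x y) 0; first by rewrite scale0r; apply: parity_op0.
by apply: parity_opZ; have := parity_op_delta x y; rewrite sp_xy addbAC addbb.
Qed.

Definition parity_proj (p : bool) : mat := diag_mx (\row_x (sp x == p)%:R).

Lemma parity_projE p q M x y :
  (parity_proj p *m M *m parity_proj q) x y = ((sp x == p) && (sp y == q))%:R * M x y.
Proof.
rewrite mul_mx_diag mul_diag_mx !mxE.
by case: (sp x == p); case: (sp y == q); rewrite ?mul1r ?mulr1 ?mul0r ?mulr0.
Qed.

Lemma homogeneous_parity_proj p q M :
  homogeneous (p (+) q) (parity_proj p *m M *m parity_proj q).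
Proof.
move=> x y; rewrite parity_projE mulf_eq0 negb_or pnatr_eq0 eqb0 negbK.
by case/andP => /andP [/eqP-> /eqP->]; case: p; case: q.
Qed.

Lemma adj_parity_proj p : adj (parity_proj p) = parity_proj p.
Proof.
apply/matrixP => x y; rewrite adjE !mxE.
have [->|_] := eqVneq x y; last by rewrite !mulr0n rmorph0.
by rewrite !mulr1n; case: (sp y == p); rewrite ?rmorph1 ?rmorph0.
Qed.

Lemma parity_proj_idem p : parity_proj p *m parity_proj p = parity_proj p.
Proof.
apply/matrixP => x y; rewrite mul_mx_diag !mxE.
have [->|_] := eqVneq x y; last by rewrite mulr0n mul0r.
by case: (sp y == p); rewrite ?mulr1 ?mulr0.
Qed.

Lemma parity_proj_sum : parity_proj true + parity_proj false = 1%:M.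
Proof.
by apply/matrixP => x y; rewrite !mxE; case: (x == y); case: (sp x); rewrite ?addr0 ?add0r.
Qed.

Lemma homogeneous_parity_split M : homogeneous false M ->
  parity_proj true *m M *m parity_proj true
  + parity_proj false *m M *m parity_proj false = M.
Proof.
move=> hM; apply/matrixP => x y; rewrite [LHS]mxE !parity_projE.
have [->|/hM->] := eqVneq (M x y) 0; first by rewrite !mulr0 addr0.
by case: (sp y); rewrite /= ?mul1r ?mul0r ?addr0 ?add0r.
Qed.

Definition parity_blocks B : seq mat :=
  [seq parity_proj p *m B *m parity_proj q
     | p <- [:: true; false], q <- [:: true; false]].

Lemma parity_blocks_definite B K : K \in parity_blocks B -> even_op K \/ odd_op K.
Proof.
case/allpairsP => [[p q] [_ _ ->]] /=.
have /parity_opP : homogeneous (p (+) q) (parity_proj p *m B *m parity_proj q).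
  exact: homogeneous_parity_proj.
by case: (p (+) q) => ?; [right | left].
Qed.

Lemma parity_blocks_gram B : homogeneous false (adj B *m B) ->
  \sum_(K <- parity_blocks B) adj K *m K = adj B *m B.
Proof.
have block_gram p q :
    adj (parity_proj p *m B *m parity_proj q) *m (parity_proj p *m B *m parity_proj q)
    = parity_proj q *m (adj B *m parity_proj p *m B) *m parity_proj q.
  rewrite !adjM !adj_parity_proj !mulmxA.
  by rewrite -(mulmxA _ (parity_proj p) (parity_proj p)) parity_proj_idem.
have -> : adj B *m B =
    adj B *m parity_proj true *m B + adj B *m parity_proj false *m B.
  by rewrite -mulmxDl -mulmxDr parity_proj_sum mulmx1.
move/homogeneous_parity_split <-.
rewrite big_allpairs_dep !big_cons !big_nil /= !addr0 !block_gram.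
by rewrite !mulmxDr !mulmxDl addrACA.
Qed.

End JordanWigner.

Section FermionicEffects.
Variables (R : realType) (L : nat).
Local Notation C := (R[i]).
Local Notation n := (2 ^ L)%N.
Local Notation mat := (mat R L).
Local Notation parity_proj := (@parity_proj R L).
Implicit Types (A B E M rho : mat) (v : 'cV[C]_n).

Lemma psd_adj M : psd M -> adj M = M.
Proof.
move=> psdM; apply/eqP; rewrite -subr_eq0; apply/eqP/qform_eq0 => v.
by rewrite qformB qform_adj geC0_conj ?subrr //; apply: psdM.
Qed.

Lemma psd_gram m (K : 'M[C]_(m, n)) : psd (adj K *m K).
Proof. by move=> v; apply: qform_gram_ge0. Qed.

Lemma psd_sum I (r : seq I) (P : pred I) (F : I -> mat) :
  (forall k, P k -> psd (F k)) -> psd (\sum_(k <- r | P k) F k).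
Proof.
move=> psdF v; change (0 <= qform v (\sum_(k <- r | P k) F k)).
by rewrite qform_sum; apply: sumr_ge0 => k /psdF; apply.
Qed.

Lemma psd_trace_ge0 M : psd M -> 0 <= \tr M.
Proof. by move=> psdM; rewrite mxtrace_qform; apply: sumr_ge0 => x _; apply: psdM. Qed.

Lemma psd_factor M : psd M -> exists B : mat, adj B *m B = M.
Proof.
move=> psdM; have M_normal : M \is normalmx.
  by apply/normalmxP; rewrite -map_trmx -/(adj M) psd_adj.
have /orthomx_spectralP M_eq := M_normal.
set P := spectralmx M in M_eq; set d := spectral_diag M in M_eq.
have P_unitary : P \is unitarymx by apply: spectral_unitarymx.
rewrite invmx_unitary // -map_trmx -/(adj P) in M_eq.
have PPadj : P *m adj P = 1%:M by rewrite /adj map_trmx; apply/unitarymxP.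
clearbody P d.
have d_ge0 j : 0 <= d 0 j.
  have -> : d 0 j = qform (adj P *m delta_mx j 0) M.
    rewrite -qform_conj adjK M_eq !mulmxA PPadj mul1mx -mulmxA PPadj mulmx1.
    by rewrite /qform sform_delta mxE eqxx mulr1n.
  exact: psdM.
exists (diag_mx (\row_j sqrtC (d 0 j)) *m P).
rewrite adjM M_eq -!mulmxA; congr (_ *m _); rewrite mulmxA; congr (_ *m _).
apply/matrixP => a b; rewrite mul_mx_diag !mxE.
have [->|_] := eqVneq a b; last by rewrite !mulr0n rmorph0 mul0r.
by rewrite !mulr1n geC0_conj ?sqrtC_ge0 // -expr2 sqrtCK.
Qed.


Lemma mxtrace_rank_one (w : 'cV[C]_n) M : \tr (w *m adj w *m M) = qform w M.
Proof. by rewrite -mulmxA mxtrace_mulC /mxtrace big_ord1. Qed.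

Lemma mxtrace_kraus (Ks : seq mat) (X : mat) :
  \tr (\sum_(K <- Ks) K *m X *m adj K) = \tr (X *m \sum_(K <- Ks) adj K *m K).
Proof.
rewrite mulmx_sumr !raddf_sum; apply: eq_bigr => K _.
by rewrite /= mxtrace_mulC [in RHS]mxtrace_mulC !mulmxA.
Qed.

Lemma fermionic_state_scale rho : even_op rho -> psd rho ->
  exists2 eps : C, 0 < eps & fermionic_state (eps *: rho).
Proof.
move=> even_rho psd_rho; have /parity_opP h_rho := even_rho.
have tr_ge0 := psd_trace_ge0 psd_rho.
have norm_gt0 : 0 < 1 + \tr rho by rewrite ltr_wpDr // ltr01.
exists (1 + \tr rho)^-1; first by rewrite invr_gt0.
split.
- exact: parity_opZ.
- move=> v; change (0 <= qform v ((1 + \tr rho)^-1 *: rho)).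
  by rewrite qformZ; apply: mulr_ge0 (psd_rho v); rewrite invr_ge0 ltW.
- move=> x y sp_neq; rewrite mxE; have [->|/h_rho] := eqVneq (rho x y) 0.
    by rewrite mulr0.
  by rewrite addbF => sp_eq; rewrite sp_eq eqxx in sp_neq.
- by rewrite mxtraceZ ler_pdivrMl // mulr1 lerDr ler01.
Qed.

Lemma qform_even_split D v : homogeneous false D ->
  qform v D = qform (parity_proj true *m v) D + qform (parity_proj false *m v) D.
Proof.
move=> hD; rewrite -{1}(homogeneous_parity_split hD) qformD.
by rewrite -!qform_conj !adj_parity_proj.
Qed.

Lemma fermionic_states_separate A E : even_op A -> even_op E ->
  (forall rho, fermionic_state rho -> \tr (rho *m A) = \tr (rho *m E)) -> A = E.
Proof.
move=> even_A even_E eq_AE; apply/eqP; rewrite -subr_eq0; apply/eqP/qform_eq0 => v.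
have /parity_opP hD := parity_opB even_A even_E.
rewrite (qform_even_split _ hD).
suff pure0 p : qform (parity_proj p *m v) (A - E) = 0 by rewrite !pure0 addr0.
set w := parity_proj p *m v.
have even_ww : even_op (w *m adj w).
  rewrite /w adjM adj_parity_proj !mulmxA -(mulmxA (parity_proj p) v).
  rewrite /even_op -(addbb p).
  by apply/parity_opP/homogeneous_parity_proj.
have psd_ww : psd (w *m adj w) by rewrite -{1}[w]adjK; apply: psd_gram.
have [eps /lt0r_neq0 eps_neq0 state_w] := fermionic_state_scale even_ww psd_ww.
have := eq_AE _ state_w; rewrite -!scalemxAl !mxtraceZ !mxtrace_rank_one.
by move/(mulfI eps_neq0) => eq_w; rewrite qformB eq_w subrr.
Qed.

Lemma fermionic_effect_representative A : fermionic_effect A ->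
  exists E : mat, [/\ even_op E, psd E, psd (1%:M - E)
    & forall rho, fermionic_state rho -> \tr (rho *m A) = \tr (rho *m E)].
Proof.
move=> [T [[Ks [parity_Ks bounded_Ks T_E]] A_T]].
exists (\sum_(K <- Ks) adj K *m K); split => //.
- rewrite big_seq; apply: parity_op_sum => K /parity_Ks parity_K.
  have [b parity_bK] : exists b, parity_op b K by case: parity_K; [exists false|exists true].
  rewrite /even_op -(addbb b).
  exact: parity_opM (parity_op_adj parity_bK) parity_bK.
- by apply: psd_sum => K _; apply: psd_gram.
- by move=> rho state_rho; rewrite A_T // T_E mxtrace_kraus.
Qed.

Lemma even_fermionic_effect_bounded A : even_op A -> fermionic_effect A ->
  psd A /\ psd (1%:M - A).
Proof.
move=> even_A /fermionic_effect_representative [E [even_E psd_E psd_1E eq_AE]].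
by rewrite (fermionic_states_separate even_A even_E eq_AE).
Qed.

Lemma bounded_even_fermionic_effect A : even_op A -> psd A -> psd (1%:M - A) ->
  fermionic_effect A.
Proof.
move=> even_A psd_A psd_1A; have [B BB] := psd_factor psd_A.
have sum_blocks : \sum_(K <- parity_blocks B) adj K *m K = A.
  by rewrite parity_blocks_gram BB //; apply/parity_opP.
exists (fun X => \sum_(K <- parity_blocks B) K *m X *m adj K); split; last first.
  by move=> rho _; rewrite mxtrace_kraus sum_blocks.
exists (parity_blocks B); split => //; last by rewrite sum_blocks.
exact: parity_blocks_definite.
Qed.

End FermionicEffects.

Theorem corollary1 (R : realType) (L : nat) :
  (* every fermionic effect is (as a functional on fermionic states) given by
     an even operator E with 0 <= J(E) <= I *)
  (forall A : mat R L, fermionic_effect A ->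
     exists E : mat R L,
       [/\ even_op E, psd E, psd (1%:M - E)
         & forall rho, fermionic_state rho -> \tr (rho *m A) = \tr (rho *m E)])
  (* an even fermionic effect itself satisfies 0 <= J(A) <= I *)
  /\ (forall A : mat R L, even_op A -> fermionic_effect A ->
        psd A /\ psd (1%:M - A))
  (* conversely, every even A with 0 <= J(A) <= I is a fermionic effect *)
  /\ (forall A : mat R L, even_op A -> psd A -> psd (1%:M - A) ->
        fermionic_effect A).
Proof.
split; first exact: fermionic_effect_representative.
split; first exact: even_fermionic_effect_bounded.
exact: bounded_even_fermionic_effect.
Qed.
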